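(* Let $A\in\mathbb{C}^{m\times n}$, $B\in\mathbb{C}^{n\times p}$, $C\in\mathbb{C}^{p\times q}$ and $M=ABC$. Then each of the following sets is contained in $\{M^{(1,2)}\}$: $\{(A^{(1,2)}M)^{(1,2)}A^{(1,2)}\}$, $\{C^{(1,2)}(MC^{(1,2)})^{(1,2)}\}$, $\{(A^{*}M)^{(1,2)}A^{*}\}$, $\{C^{*}(MC^{*})^{(1,2)}\}$, $\{(AA^{*}M)^{(1,2)}AA^{*}\}$, $\{C^{*}C(MC^{*}C)^{(1,2)}\}$, $\{C^{(1,2)}(A^{(1,2)}MC^{(1,2)})^{(1,2)}A^{(1,2)}\}$, $\{C^{*}(A^{*}MC^{*})^{(1,2)}A^{*}\}$, $\{[(AB)^{(1,2)}M]^{(1,2)}(AB)^{(1,2)}\}$, $\{(BC)^{(1,2)}[M(BC)^{(1,2)}]^{(1,2)}\}$, $\{[(AB)^{*}M]^{(1,2)}(AB)^{*}\}$, $\{(BC)^{*}[M(BC)^{*}]^{(1,2)}\}$, $\{[(ABB^{(1,2)})^{(1,2)}M]^{(1,2)}(ABB^{(1,2)})^{(1,2)}\}$, $\{(B^{(1,2)}BC)^{(1,2)}[M(B^{(1,2)}BC)^{(1,2)}]^{(1,2)}\}$, $\{[(ABB^{*})^{(1,2)}M]^{(1,2)}(ABB^{*})^{(1,2)}\}$, $\{(B^{*}BC)^{(1,2)}[M(B^{*}BC)^{(1,2)}]^{(1,2)}\}$, $\{C^{*}C(AA^{*}MC^{*}C)^{(1,2)}AA^{*}\}$, $\{(BC)^{(1,2)}[(AB)^{(1,2)}M(BC)^{(1,2)}]^{(1,2)}(AB)^{(1,2)}\}$,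 $\{(BC)^{*}[(AB)^{*}M(BC)^{*}]^{(1,2)}(AB)^{*}\}$, $\{(B^{(1,2)}BC)^{(1,2)}[(ABB^{(1,2)})^{(1,2)}M(B^{(1,2)}BC)^{(1,2)}]^{(1,2)}(ABB^{(1,2)})^{(1,2)}\}$, $\{(B^{(1,2)}BC)^{*}[(ABB^{(1,2)})^{*}M(B^{(1,2)}BC)^{*}]^{(1,2)}(ABB^{(1,2)})^{*}\}$, $\{(B^{*}BC)^{(1,2)}[(ABB^{*})^{(1,2)}M(B^{*}BC)^{(1,2)}]^{(1,2)}(ABB^{*})^{(1,2)}\}$, $\{(B^{*}BC)^{*}[(ABB^{*})^{*}M(B^{*}BC)^{*}]^{(1,2)}(ABB^{*})^{*}\}$.
   Context: For a complex matrix $X$, $X^*$ is its conjugate transpose. For $X\in\mathbb{C}^{p\times q}$, a matrix $G\in\mathbb{C}^{q\times p}$ is called an $\{i,\ldots,j\}$-generalized inverse of $X$ (written $X^{(i,\ldots,j)}$) if it satisfies the equations numbered $i,\ldots,j$ among the four Penrose equations (i) $XGX=X$, (ii) $GXG=G$, (iii) $(XG)^*=XG$, (iv) $(GX)^*=GX$; $\{X^{(i,\ldots,j)}\}$ denotes the set of all such $G$. For a matrix expression involving generalized inverses, $\{\cdot\}$ denotes the set of all values of the expression as each generalized inverse occurring in it ranges over all admissible choices; repeated occurrences of the same symbol (e.g. $(AB)^{(1,2)}$ appearing twice) denote one and the same choice, and a generalized inverse of a matrix that itself contains a chosen generalized inverse is taken with respect to that chosen matrix. *)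

(* Complex matrices are modelled over an arbitrary
   numClosedFieldType R (e.g. algC, or any model of C), with Num.conj as
   complex conjugation. *)
From HB Require Import structures.
From mathcomp Require Import all_boot all_order all_algebra.
Set Implicit Arguments. Unset Strict Implicit. Unset Printing Implicit Defensive.
Import Order.TTheory GRing.Theory Num.Theory.
Local Open Scope ring_scope.

Definition ctr (R : numClosedFieldType) (m n : nat) (X : 'M[R]_(m, n)) : 'M[R]_(n, m) :=
  (map_mx Num.conj X)^T.

Definition is_inv12 (R : numClosedFieldType) (m n : nat)
  (X : 'M[R]_(m, n)) (G : 'M[R]_(n, m)) : Prop :=
  X *m G *m X = X /\ G *m X *m G = G.

(* If [rank (V M) = rank M] then [M = S V M] for some [S], and if
   [rank (M U) = rank M] then [M = M U T] for some [T]; with these two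
   factorizations the Penrose equations for [X] relative to [V M U] transfer to
   [U X V] relative to [M].  Every set of the theorem has this shape for
   [M = A B C]: the outer factors are {1}-inverses, conjugate transposes or
   products [A A^*] of a left factor of [M] (and dually on the right), and all
   of these keep the rank because [rank (A^* A) = rank A]. *)

From HB Require Import structures.
From mathcomp Require Import all_boot all_order all_algebra.
Import Order.TTheory GRing.Theory Num.Theory.
Local Open Scope ring_scope.
Set Implicit Arguments. Unset Strict Implicit. Unset Printing Implicit Defensive.

Section MiddleFactor.
Variable R : pzRingType.

Lemma mulmx_factor_midr m n p q k (A : 'M[R]_(m, n)) (B : 'M_(n, p)) (C : 'M_(p, q))
    (W : 'M_(p, k)) (T : 'M_(k, p)) :
  B = B *m W *m T -> A *m B *m C = A *m B *m W *m (T *m C).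
Proof. by move=> defB; rewrite {1}defB !mulmxA. Qed.

Lemma mulmx_factor_midl m n p q k (A : 'M[R]_(m, n)) (B : 'M_(n, p)) (C : 'M_(p, q))
    (S : 'M_(n, k)) (W : 'M_(k, n)) :
  B = S *m W *m B -> A *m B *m C = A *m S *m (W *m B *m C).
Proof. by move=> defB; rewrite {1}defB !mulmxA. Qed.

End MiddleFactor.

Section RankFactorization.
Variable F : fieldType.

Lemma mxrank_mull_factor m n k (V : 'M[F]_(k, m)) (A : 'M_(m, n)) :
  \rank (V *m A) = \rank A -> exists D, A = D *m V *m A.
Proof.
move=> rVA; have [_ eqVA] := mxrank_leqif_sup (submxMl V A).
have /submxP[D defA] : (A <= V *m A)%MS by rewrite -eqVA rVA.
by exists D; rewrite -mulmxA.
Qed.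

Lemma mxrank_mulr_factor m n k (A : 'M[F]_(m, n)) (U : 'M_(n, k)) :
  \rank (A *m U) = \rank A -> exists D, A = A *m U *m D.
Proof.
move=> rAU; have [D defAt] : exists D, A^T = D *m U^T *m A^T.
  by apply: mxrank_mull_factor; rewrite -trmx_mul !mxrank_tr.
by exists D^T; apply: trmx_inj; rewrite !trmx_mul trmxK mulmxA.
Qed.

Lemma mxrank_mull_mulmx m n k l (V : 'M[F]_(k, m)) (A : 'M_(m, n)) (N : 'M_(n, l)) :
  \rank (V *m A) = \rank A -> \rank (V *m (A *m N)) = \rank (A *m N).
Proof.
move=> /mxrank_mull_factor[D defA]; apply/eqP; rewrite eqn_leq mxrankM_maxr /=.
by rewrite {1}defA -!mulmxA mxrankM_maxr.
Qed.

Lemma mxrank_mulr_mulmx m n k l (A : 'M[F]_(m, n)) (U : 'M_(n, k)) (N : 'M_(l, m)) :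
  \rank (A *m U) = \rank A -> \rank (N *m A *m U) = \rank (N *m A).
Proof.
move=> rAU; rewrite -[LHS]mxrank_tr -[RHS]mxrank_tr !trmx_mul.
by apply: mxrank_mull_mulmx; rewrite -trmx_mul !mxrank_tr.
Qed.

Lemma mxrank_inv1_mull m n l (A : 'M[F]_(m, n)) (G : 'M_(n, m)) (N : 'M_(n, l)) :
  A *m G *m A = A -> \rank (G *m (A *m N)) = \rank (A *m N).
Proof.
move=> AGA; apply: mxrank_mull_mulmx; apply/eqP.
by rewrite eqn_leq mxrankM_maxr -{1}AGA -mulmxA mxrankM_maxr.
Qed.

Lemma mxrank_inv1_mulr m n l (A : 'M[F]_(m, n)) (G : 'M_(n, m)) (N : 'M_(l, m)) :
  A *m G *m A = A -> \rank (N *m A *m G) = \rank (N *m A).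
Proof.
move=> AGA; apply: mxrank_mulr_mulmx; apply/eqP.
by rewrite eqn_leq mxrankM_maxl -{1}AGA mxrankM_maxl.
Qed.

End RankFactorization.

Section ConjugateTranspose.
Variable R : numClosedFieldType.

Lemma ctrK m n (A : 'M[R]_(m, n)) : ctr (ctr A) = A.
Proof. by apply/matrixP => i j; rewrite /ctr !mxE conjCK. Qed.

Lemma ctrM m n p (A : 'M[R]_(m, n)) (B : 'M_(n, p)) :
  ctr (A *m B) = ctr B *m ctr A.
Proof. by rewrite /ctr map_mxM trmx_mul. Qed.

Lemma mxrank_ctr m n (A : 'M[R]_(m, n)) : \rank (ctr A) = \rank A.
Proof. by rewrite /ctr mxrank_tr mxrank_map. Qed.

Lemma mulmx_ctr_eq0 m n (Y : 'M[R]_(m, n)) : Y *m ctr Y = 0 -> Y = 0.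
Proof.
move=> /matrixP YY0; apply/matrixP => i j; rewrite mxE.
have /eqP := YY0 i i; rewrite !mxE.
under eq_bigr => k _ do rewrite /ctr !mxE.
rewrite psumr_eq0; last by move=> k _; apply: mul_conjC_ge0.
by move=> /allP/(_ j (mem_index_enum _)) /=; rewrite mul_conjC_eq0 => /eqP.
Qed.

Lemma capmx_ctr_ker m n (A : 'M[R]_(m, n)) : (ctr A :&: kermx A)%MS = 0.
Proof.
set K := (_ :&: _)%MS.
have /submxP[W defK] : (K <= ctr A)%MS := capmxSl _ _.
have KA0 : K *m A = 0 by apply/sub_kermxP; apply: capmxSr.
by apply: mulmx_ctr_eq0; rewrite {2}defK ctrM ctrK mulmxA KA0 mul0mx.
Qed.

Lemma mxrank_ctr_mul m n (A : 'M[R]_(m, n)) : \rank (ctr A *m A) = \rank A.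
Proof.
by have := mxrank_mul_ker (ctr A) A; rewrite capmx_ctr_ker mxrank0 addn0 mxrank_ctr.
Qed.

Lemma mxrank_mul_ctr m n (A : 'M[R]_(m, n)) : \rank (A *m ctr A) = \rank A.
Proof. by rewrite -{1}[A]ctrK mxrank_ctr_mul mxrank_ctr. Qed.

Lemma ctr_mul_factorl m n (A : 'M[R]_(m, n)) : exists S, A = S *m ctr A *m A.
Proof. by apply: mxrank_mull_factor; rewrite mxrank_ctr_mul. Qed.

Lemma mul_ctr_factorr m n (A : 'M[R]_(m, n)) : exists T, A = A *m ctr A *m T.
Proof. by apply: mxrank_mulr_factor; rewrite mxrank_mul_ctr. Qed.

Lemma mxrank_ctr_mull m n l (A : 'M[R]_(m, n)) (N : 'M_(n, l)) :
  \rank (ctr A *m (A *m N)) = \rank (A *m N).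
Proof. exact/mxrank_mull_mulmx/mxrank_ctr_mul. Qed.

Lemma mxrank_ctr_mulr m n l (A : 'M[R]_(m, n)) (N : 'M_(l, m)) :
  \rank (N *m A *m ctr A) = \rank (N *m A).
Proof. exact/mxrank_mulr_mulmx/mxrank_mul_ctr. Qed.

Lemma mxrank_mul_ctr_mull m n l (A : 'M[R]_(m, n)) (N : 'M_(n, l)) :
  \rank (A *m ctr A *m (A *m N)) = \rank (A *m N).
Proof.
apply: mxrank_mull_mulmx.
by rewrite -mulmxA -{1}[A]ctrK mxrank_ctr_mull mxrank_ctr_mul.
Qed.

Lemma mxrank_ctr_mul_mulr m n l (A : 'M[R]_(m, n)) (N : 'M_(l, m)) :
  \rank (N *m A *m (ctr A *m A)) = \rank (N *m A).
Proof.
apply: mxrank_mulr_mulmx.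
by rewrite mulmxA -{3}[A]ctrK mxrank_ctr_mulr mxrank_mul_ctr.
Qed.

Lemma inv12_sandwich m q a b (M : 'M[R]_(m, q)) (V : 'M_(a, m)) (U : 'M_(q, b))
    (X : 'M_(b, a)) :
  \rank (V *m M) = \rank M -> \rank (M *m U) = \rank M ->
  is_inv12 (V *m M *m U) X -> is_inv12 M (U *m X *m V).
Proof.
move=> /mxrank_mull_factor[S defMl] /mxrank_mulr_factor[T defMr] [HXH XHX].
split.
  have -> : M *m (U *m X *m V) *m M = S *m (V *m M *m U *m X *m (V *m M *m U)) *m T.
    by rewrite {1}defMl {2}defMr !mulmxA.
  by rewrite HXH !mulmxA -defMl -defMr.
have -> : U *m X *m V *m M *m (U *m X *m V) = U *m (X *m (V *m M *m U) *m X) *m V.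
  by rewrite !mulmxA.
by rewrite XHX.
Qed.

Lemma inv12_mull m q a (M : 'M[R]_(m, q)) (V : 'M_(a, m)) (X : 'M_(q, a)) :
  \rank (V *m M) = \rank M -> is_inv12 (V *m M) X -> is_inv12 M (X *m V).
Proof.
move=> rVM hX; rewrite -[X]mul1mx; apply: inv12_sandwich; rewrite ?mulmx1 //.
Qed.

Lemma inv12_mulr m q b (M : 'M[R]_(m, q)) (U : 'M_(q, b)) (X : 'M_(b, m)) :
  \rank (M *m U) = \rank M -> is_inv12 (M *m U) X -> is_inv12 M (U *m X).
Proof.
move=> rMU hX; rewrite -[U *m X]mulmx1; apply: inv12_sandwich; rewrite ?mul1mx //.
Qed.

End ConjugateTranspose.

Theorem theorem3p3 (R : numClosedFieldType) (m n p q : nat)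
  (A : 'M[R]_(m, n)) (B : 'M[R]_(n, p)) (C : 'M[R]_(p, q)) :
  let M := A *m B *m C in
  (* 1: (A^(1,2) M)^(1,2) A^(1,2)  *)
  (forall (Ag : 'M_(n, m)) (X : 'M_(q, n)),
      is_inv12 A Ag -> is_inv12 (Ag *m M) X -> is_inv12 M (X *m Ag)) /\
  (* 2: C^(1,2) (M C^(1,2))^(1,2)  *)
  (forall (Cg : 'M_(q, p)) (X : 'M_(p, m)),
      is_inv12 C Cg -> is_inv12 (M *m Cg) X -> is_inv12 M (Cg *m X)) /\
  (* 3: (A^H M)^(1,2) A^H  *)
  (forall (X : 'M_(q, n)),
      is_inv12 (ctr A *m M) X -> is_inv12 M (X *m ctr A)) /\
  (* 4: C^H (M C^H)^(1,2)  *)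
  (forall (X : 'M_(p, m)),
      is_inv12 (M *m ctr C) X -> is_inv12 M (ctr C *m X)) /\
  (* 5: (A A^H M)^(1,2) A A^H  *)
  (forall (X : 'M_(q, m)),
      is_inv12 (A *m ctr A *m M) X -> is_inv12 M (X *m (A *m ctr A))) /\
  (* 6: C^H C (M C^H C)^(1,2)  *)
  (forall (X : 'M_(q, m)),
      is_inv12 (M *m ctr C *m C) X -> is_inv12 M (ctr C *m C *m X)) /\
  (* 7: C^(1,2) (A^(1,2) M C^(1,2))^(1,2) A^(1,2)  *)
  (forall (Ag : 'M_(n, m)) (Cg : 'M_(q, p)) (X : 'M_(p, n)),
      is_inv12 A Ag -> is_inv12 C Cg -> is_inv12 (Ag *m M *m Cg) X ->
      is_inv12 M (Cg *m X *m Ag)) /\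
  (* 8: C^H (A^H M C^H)^(1,2) A^H  *)
  (forall (X : 'M_(p, n)),
      is_inv12 (ctr A *m M *m ctr C) X -> is_inv12 M (ctr C *m X *m ctr A)) /\
  (* 9: [(AB)^(1,2) M]^(1,2) (AB)^(1,2)  *)
  (forall (ABg : 'M_(p, m)) (X : 'M_(q, p)),
      is_inv12 (A *m B) ABg -> is_inv12 (ABg *m M) X ->
      is_inv12 M (X *m ABg)) /\
  (* 10: (BC)^(1,2) [M (BC)^(1,2)]^(1,2)  *)
  (forall (BCg : 'M_(q, n)) (X : 'M_(n, m)),
      is_inv12 (B *m C) BCg -> is_inv12 (M *m BCg) X ->
      is_inv12 M (BCg *m X)) /\
  (* 11: [(AB)^H M]^(1,2) (AB)^H  *)
  (forall (X : 'M_(q, p)),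
      is_inv12 (ctr (A *m B) *m M) X -> is_inv12 M (X *m ctr (A *m B))) /\
  (* 12: (BC)^H [M (BC)^H]^(1,2)  *)
  (forall (X : 'M_(n, m)),
      is_inv12 (M *m ctr (B *m C)) X -> is_inv12 M (ctr (B *m C) *m X)) /\
  (* 13: [(A B B^(1,2))^(1,2) M]^(1,2) (A B B^(1,2))^(1,2)  *)
  (forall (Bg : 'M_(p, n)) (Y : 'M_(n, m)) (X : 'M_(q, n)),
      is_inv12 B Bg -> is_inv12 (A *m B *m Bg) Y -> is_inv12 (Y *m M) X ->
      is_inv12 M (X *m Y)) /\
  (* 14: (B^(1,2) B C)^(1,2) [M (B^(1,2) B C)^(1,2)]^(1,2)  *)
  (forall (Bg : 'M_(p, n)) (Z : 'M_(q, p)) (X : 'M_(p, m)),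
      is_inv12 B Bg -> is_inv12 (Bg *m B *m C) Z -> is_inv12 (M *m Z) X ->
      is_inv12 M (Z *m X)) /\
  (* 15: [(A B B^H )^(1,2) M]^(1,2) (A B B^H )^(1,2)  *)
  (forall (Y : 'M_(n, m)) (X : 'M_(q, n)),
      is_inv12 (A *m B *m ctr B) Y -> is_inv12 (Y *m M) X ->
      is_inv12 M (X *m Y)) /\
  (* 16: (B^H B C)^(1,2) [M (B^H B C)^(1,2)]^(1,2)  *)
  (forall (Z : 'M_(q, p)) (X : 'M_(p, m)),
      is_inv12 (ctr B *m B *m C) Z -> is_inv12 (M *m Z) X ->
      is_inv12 M (Z *m X)) /\
  (* 17: C^H C (A A^H M C^H C)^(1,2) A A^H  *)
  (forall (X : 'M_(q, m)),
      is_inv12 (A *m ctr A *m M *m ctr C *m C) X ->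
      is_inv12 M (ctr C *m C *m X *m (A *m ctr A))) /\
  (* 18: (BC)^(1,2) [(AB)^(1,2) M (BC)^(1,2)]^(1,2) (AB)^(1,2)  *)
  (forall (ABg : 'M_(p, m)) (BCg : 'M_(q, n)) (X : 'M_(n, p)),
      is_inv12 (A *m B) ABg -> is_inv12 (B *m C) BCg ->
      is_inv12 (ABg *m M *m BCg) X ->
      is_inv12 M (BCg *m X *m ABg)) /\
  (* 19: (BC)^H [(AB)^H M (BC)^H]^(1,2) (AB)^H  *)
  (forall (X : 'M_(n, p)),
      is_inv12 (ctr (A *m B) *m M *m ctr (B *m C)) X ->
      is_inv12 M (ctr (B *m C) *m X *m ctr (A *m B))) /\
  (* 20: (B^(1,2)BC)^(1,2) [(ABB^(1,2))^(1,2) M (B^(1,2)BC)^(1,2)]^(1,2) (ABB^(1,2))^(1,2)  *)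
  (forall (Bg : 'M_(p, n)) (Y : 'M_(n, m)) (Z : 'M_(q, p)) (X : 'M_(p, n)),
      is_inv12 B Bg -> is_inv12 (A *m B *m Bg) Y -> is_inv12 (Bg *m B *m C) Z ->
      is_inv12 (Y *m M *m Z) X ->
      is_inv12 M (Z *m X *m Y)) /\
  (* 21: (B^(1,2)BC)^H [(ABB^(1,2))^H M (B^(1,2)BC)^H]^(1,2) (ABB^(1,2))^H  *)
  (forall (Bg : 'M_(p, n)) (X : 'M_(p, n)),
      is_inv12 B Bg ->
      is_inv12 (ctr (A *m B *m Bg) *m M *m ctr (Bg *m B *m C)) X ->
      is_inv12 M (ctr (Bg *m B *m C) *m X *m ctr (A *m B *m Bg))) /\
  (* 22: (B^HBC)^(1,2) [(ABB^H )^(1,2) M (B^HBC)^(1,2)]^(1,2) (ABB^H )^(1,2)  *)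
  (forall (Y : 'M_(n, m)) (Z : 'M_(q, p)) (X : 'M_(p, n)),
      is_inv12 (A *m B *m ctr B) Y -> is_inv12 (ctr B *m B *m C) Z ->
      is_inv12 (Y *m M *m Z) X ->
      is_inv12 M (Z *m X *m Y)) /\
  (* 23: (B^HBC)^H [(ABB^H )^H M (B^HBC)^H]^(1,2) (ABB^H )^H  *)
  (forall (X : 'M_(p, n)),
      is_inv12 (ctr (A *m B *m ctr B) *m M *m ctr (ctr B *m B *m C)) X ->
      is_inv12 M (ctr (ctr B *m B *m C) *m X *m ctr (A *m B *m ctr B))).

Proof.
rewrite /=.
have eMA : A *m B *m C = A *m (B *m C) by rewrite mulmxA.
have [T /(mulmx_factor_midr A C) eMr] := mul_ctr_factorr B.
have [S /(mulmx_factor_midl A C) eMl] := ctr_mul_factorl B.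
repeat match goal with |- _ /\ _ => split end.
- move=> Ag X [hA _]; apply: inv12_mull; rewrite eMA; exact: mxrank_inv1_mull.
- move=> Cg X [hC _]; apply: inv12_mulr; exact: mxrank_inv1_mulr.
- move=> X; apply: inv12_mull; rewrite eMA; exact: mxrank_ctr_mull.
- move=> X; apply: inv12_mulr; exact: mxrank_ctr_mulr.
- move=> X; apply: inv12_mull; rewrite eMA; exact: mxrank_mul_ctr_mull.
- move=> X; rewrite -mulmxA; apply: inv12_mulr; exact: mxrank_ctr_mul_mulr.
- move=> Ag Cg X [hA _] [hC _]; apply: inv12_sandwich.
    by rewrite eMA; apply: mxrank_inv1_mull.
  exact: mxrank_inv1_mulr.
- move=> X; apply: inv12_sandwich; last exact: mxrank_ctr_mulr.
  by rewrite eMA; apply: mxrank_ctr_mull.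
- move=> ABg X [hAB _]; apply: inv12_mull; exact: mxrank_inv1_mull.
- move=> BCg X [hBC _]; apply: inv12_mulr; rewrite eMA; exact: mxrank_inv1_mulr.
- move=> X; apply: inv12_mull; exact: mxrank_ctr_mull.
- move=> X; apply: inv12_mulr; rewrite eMA; exact: mxrank_ctr_mulr.
- move=> Bg Y X [hB _] [hY _]; apply: inv12_mull.
  rewrite (mulmx_factor_midr A C (esym hB)); exact: mxrank_inv1_mull.
- move=> Bg Z X [hB _] [hZ _]; apply: inv12_mulr.
  rewrite (mulmx_factor_midl A C (esym hB)); exact: mxrank_inv1_mulr.
- move=> Y X [hY _]; apply: inv12_mull; rewrite eMr; exact: mxrank_inv1_mull.
- move=> Z X [hZ _]; apply: inv12_mulr; rewrite eMl; exact: mxrank_inv1_mulr.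
- move=> X; rewrite -[_ *m ctr C *m C]mulmxA; apply: inv12_sandwich.
    by rewrite eMA; apply: mxrank_mul_ctr_mull.
  exact: mxrank_ctr_mul_mulr.
- move=> ABg BCg X [hAB _] [hBC _]; apply: inv12_sandwich.
    exact: mxrank_inv1_mull.
  by rewrite eMA; apply: mxrank_inv1_mulr.
- move=> X; apply: inv12_sandwich; first exact: mxrank_ctr_mull.
  by rewrite eMA; apply: mxrank_ctr_mulr.
- move=> Bg Y Z X [hB _] [hY _] [hZ _]; apply: inv12_sandwich.
    by rewrite (mulmx_factor_midr A C (esym hB)); apply: mxrank_inv1_mull.
  by rewrite (mulmx_factor_midl A C (esym hB)); apply: mxrank_inv1_mulr.
- move=> Bg X [hB _]; apply: inv12_sandwich.
    by rewrite (mulmx_factor_midr A C (esym hB)); apply: mxrank_ctr_mull.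
  by rewrite (mulmx_factor_midl A C (esym hB)); apply: mxrank_ctr_mulr.
- move=> Y Z X [hY _] [hZ _]; apply: inv12_sandwich.
    by rewrite eMr; apply: mxrank_inv1_mull.
  by rewrite eMl; apply: mxrank_inv1_mulr.
- move=> X; apply: inv12_sandwich; first by rewrite eMr; apply: mxrank_ctr_mull.
  by rewrite eMl; apply: mxrank_ctr_mulr.
Qed.
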